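(* (Weak progress for $\lambda_{\mathrm{ch}}$ configurations.) Let $\cdot ; \cdot \vdash \mathcal{C}$, suppose $\mathcal{C}$ cannot reduce (there is no $\mathcal{C}'$ with $\mathcal{C} \longrightarrow \mathcal{C}'$), and let $\mathcal{C}' = (\nu a_1) \ldots (\nu a_n)(M_1 \parallel \ldots \parallel M_m \parallel a_1(\vec V_1) \parallel \ldots \parallel a_n(\vec V_n))$ be a canonical form of $\mathcal{C}$. Then every leaf of $\mathcal{C}$ is either: (1) a buffer $a_i(\vec V_i)$; (2) a fully-reduced term of the form $\mathbf{return}\ V$; or (3) a term of the form $E[\mathbf{take}\ a_i]$ where $\vec V_i = \epsilon$.
   Context: The calculus $\lambda_{\mathrm{ch}}$. Types $A,B ::= \mathbf{1} \mid A \to B \mid \mathsf{Chan}(A)$; $\alpha$ ranges over variables $x$ and names $a$; values $V,W ::= \alpha \mid \lambda x.M \mid ()$; computations $M,N ::= V\,W \mid \mathbf{let}\ x \Leftarrow M\ \mathbf{in}\ N \mid \mathbf{return}\ V \mid \mathbf{fork}\ M \mid \mathbf{give}\ V\ W \mid \mathbf{take}\ V \mid \mathbf{newCh}$. Value typing: $\Gamma\vdash\alpha:A$ if $\alpha:A\in\Gamma$; $\Gamma\vdash\lambda x.M:A\to B$ if $\Gamma,x:A\vdash M:B$; $\Gamma\vdash():\mathbf 1$. Computation typing: $V\,W : B$ if $V:A\to B$, $W:A$; $\mathbf{let}\ x \Leftarrow M\ \mathbf{in}\ N : B$ if $\Gamma\vdash M:A$, $\Gamma,x:A\vdash N:B$;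 $\mathbf{return}\ V : A$ if $V:A$; $\mathbf{give}\ V\ W : \mathbf{1}$ if $V:A$, $W:\mathsf{Chan}(A)$; $\mathbf{take}\ V : A$ if $V:\mathsf{Chan}(A)$; $\mathbf{fork}\ M : \mathbf{1}$ if $M:\mathbf 1$; $\mathbf{newCh} : \mathsf{Chan}(A)$ for any $A$. Evaluation contexts $E ::= [\,] \mid \mathbf{let}\ x \Leftarrow E\ \mathbf{in}\ M$; term reduction: $(\lambda x.M)V \longrightarrow_{\mathsf{M}} M\{V/x\}$, $\mathbf{let}\ x \Leftarrow \mathbf{return}\ V\ \mathbf{in}\ M \longrightarrow_{\mathsf{M}} M\{V/x\}$, $E[M_1]\longrightarrow_{\mathsf{M}} E[M_2]$ if $M_1\longrightarrow_{\mathsf{M}} M_2$. Configurations $\mathcal{C},\mathcal{D} ::= \mathcal{C} \parallel \mathcal{D} \mid (\nu a)\mathcal{C} \mid a(\vec V) \mid M$ ($a(\vec V)$ a buffer named $a$ holding $\vec V=V_1\cdot\ldots\cdot V_n$; $\epsilon$ the empty sequence). Configuration contexts $G ::= [\,] \mid G \parallel \mathcal{C} \mid (\nu a)G$. Configuration typing $\Gamma;\Delta\vdash\mathcal{C}$ ($\Delta$ linear): (Par) $\Gamma;\Delta_1\vdash\mathcal{C}_1$, $\Gamma;\Delta_2\vdash\mathcal{C}_2$ give $\Gamma;\Delta_1,\Delta_2\vdash\mathcal{C}_1\parallel\mathcal{C}_2$; (Chan) $\Gamma,a:\mathsf{Chan}(A);\Delta,a:A\vdash\mathcal{C}$ gives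 $\Gamma;\Delta\vdash(\nu a)\mathcal{C}$; (Buf) $\Gamma\vdash V_i:A$ for all $i$ gives $\Gamma;a:A\vdash a(\vec V)$; (Term) $\Gamma\vdash M:\mathbf 1$ gives $\Gamma;\cdot\vdash M$. Structural congruence $\equiv$: least congruence closed under $G[-]$ with commutativity/associativity of $\parallel$ and $\mathcal{C}\parallel(\nu a)\mathcal{D}\equiv(\nu a)(\mathcal{C}\parallel\mathcal{D})$ if $a\notin\mathsf{fv}(\mathcal{C})$. Reduction $\longrightarrow$ (modulo $\equiv$): $E[\mathbf{give}\ W\ a] \parallel a(\vec V) \longrightarrow E[\mathbf{return}\ ()] \parallel a(\vec V \cdot W)$; $E[\mathbf{take}\ a] \parallel a(W\cdot\vec V) \longrightarrow E[\mathbf{return}\ W] \parallel a(\vec V)$; $E[\mathbf{fork}\ M] \longrightarrow E[\mathbf{return}\ ()] \parallel M$; $E[\mathbf{newCh}] \longrightarrow (\nu a)(E[\mathbf{return}\ a] \parallel a(\epsilon))$, $a$ fresh; $G[M_1]\longrightarrow G[M_2]$ if $M_1\longrightarrow_{\mathsf{M}} M_2$; $G[\mathcal{C}_1]\longrightarrow G[\mathcal{C}_2]$ if $\mathcal{C}_1\longrightarrow\mathcal{C}_2$. A configuration $\mathcal{C}'$ is a canonical form of $\mathcal{C}$ if $\mathcal{C}'\equiv\mathcal{C}$ and $\mathcal{C}'$ can be written $(\nu a_1) \ldots (\nu a_n)(M_1 \parallel \ldots \parallel M_m \parallel a_1(\vec V_1) \parallel \ldots \parallel a_n(\vec V_n))$.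 A leaf of a configuration is a subconfiguration without subconfigurations, i.e. a term or a buffer. *)

(* Syntax, typing and semantics of the calculus lambda_ch.
   Variables (bound by lambda and let) use de Bruijn indices; channel names
   are named (nat), bound by nu in configurations. *)
From Stdlib Require Import List Arith Permutation.
Import ListNotations.

Inductive ty : Type :=
| TyUnit : ty
| TyArr : ty -> ty -> ty
| TyChan : ty -> ty.

Inductive val : Type :=
| VVar : nat -> val
| VName : nat -> val
| VLam : tm -> val             (* lambda x. M  (binds index 0 in M) *)
| VUnit : val
with tm : Type :=
| TApp : val -> val -> tm
| TLet : tm -> tm -> tm                (* let x <= M in N (binds index 0 in N) *)
| TRet : val -> tm
| TFork : tm -> tm
| TGive : val -> val -> tm
| TTake : val -> tm
| TNewCh : tm.

Fixpoint vlift (k : nat) (V : val) : val :=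
  match V with
  | VVar n => if k <=? n then VVar (S n) else VVar n
  | VName a => VName a
  | VLam M => VLam (tlift (S k) M)
  | VUnit => VUnit
  end
with tlift (k : nat) (M : tm) : tm :=
  match M with
  | TApp V W => TApp (vlift k V) (vlift k W)
  | TLet M N => TLet (tlift k M) (tlift (S k) N)
  | TRet V => TRet (vlift k V)
  | TFork M => TFork (tlift k M)
  | TGive V W => TGive (vlift k V) (vlift k W)
  | TTake V => TTake (vlift k V)
  | TNewCh => TNewCh
  end.

(* vsubst k U V : substitute U for variable k in V (and lower the
   variables above k) *)
Fixpoint vsubst (k : nat) (U : val) (V : val) : val :=
  match V with
  | VVar n => if n =? k then U else if k <? n then VVar (pred n) else VVar n
  | VName a => VName a
  | VLam M => VLam (tsubst (S k) (vlift 0 U) M)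
  | VUnit => VUnit
  end
with tsubst (k : nat) (U : val) (M : tm) : tm :=
  match M with
  | TApp V W => TApp (vsubst k U V) (vsubst k U W)
  | TLet M N => TLet (tsubst k U M) (tsubst (S k) (vlift 0 U) N)
  | TRet V => TRet (vsubst k U V)
  | TFork M => TFork (tsubst k U M)
  | TGive V W => TGive (vsubst k U V) (vsubst k U W)
  | TTake V => TTake (vsubst k U V)
  | TNewCh => TNewCh
  end.

Definition subst1 (M : tm) (V : val) : tm := tsubst 0 V M.

Inductive ectx : Type :=
| EHole : ectx
| ELet : ectx -> tm -> ectx.

Fixpoint plug (E : ectx) (M : tm) : tm :=
  match E with
  | EHole => M
  | ELet E' N => TLet (plug E' M) N
  end.

Inductive tred : tm -> tm -> Prop :=
| tred_beta : forall M V, tred (TApp (VLam M) V) (subst1 M V)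
| tred_let : forall V M, tred (TLet (TRet V) M) (subst1 M V)
| tred_ctx : forall E M1 M2, tred M1 M2 -> tred (plug E M1) (plug E M2).

Inductive config : Type :=
| CPar : config -> config -> config
| CNu : nat -> config -> config
| CBuf : nat -> list val -> config
| CTm : tm -> config.

Fixpoint vnames (V : val) : list nat :=
  match V with
  | VVar _ => []
  | VName a => [a]
  | VLam M => tnames M
  | VUnit => []
  end
with tnames (M : tm) : list nat :=
  match M with
  | TApp V W => vnames V ++ vnames W
  | TLet M N => tnames M ++ tnames N
  | TRet V => vnames V
  | TFork M => tnames M
  | TGive V W => vnames V ++ vnames W
  | TTake V => vnames V
  | TNewCh => []
  end.

Fixpoint cfn (C : config) : list nat :=
  match C with
  | CPar C D => cfn C ++ cfn D
  | CNu a C => filter (fun b => negb (b =? a)) (cfn C)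
  | CBuf a Vs => a :: flat_map vnames Vs
  | CTm M => tnames M
  end.

Fixpoint cnames (C : config) : list nat :=
  match C with
  | CPar C D => cnames C ++ cnames D
  | CNu a C => a :: cnames C
  | CBuf a Vs => a :: flat_map vnames Vs
  | CTm M => tnames M
  end.

Definition rn (a b c : nat) : nat := if c =? a then b else c.

Fixpoint vren (a b : nat) (V : val) : val :=
  match V with
  | VVar n => VVar n
  | VName c => VName (rn a b c)
  | VLam M => VLam (tren a b M)
  | VUnit => VUnit
  end
with tren (a b : nat) (M : tm) : tm :=
  match M with
  | TApp V W => TApp (vren a b V) (vren a b W)
  | TLet M N => TLet (tren a b M) (tren a b N)
  | TRet V => TRet (vren a b V)
  | TFork M => TFork (tren a b M)
  | TGive V W => TGive (vren a b V) (vren a b W)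
  | TTake V => TTake (vren a b V)
  | TNewCh => TNewCh
  end.

Fixpoint cren (a b : nat) (C : config) : config :=
  match C with
  | CPar C D => CPar (cren a b C) (cren a b D)
  | CNu c C => if c =? a then CNu c C else CNu c (cren a b C)
  | CBuf c Vs => CBuf (rn a b c) (map (vren a b) Vs)
  | CTm M => CTm (tren a b M)
  end.

Inductive sc : config -> config -> Prop :=
| sc_refl : forall C, sc C C
| sc_sym : forall C D, sc C D -> sc D C
| sc_trans : forall C D E, sc C D -> sc D E -> sc C E
| sc_comm : forall C D, sc (CPar C D) (CPar D C)
| sc_assoc : forall C D E, sc (CPar C (CPar D E)) (CPar (CPar C D) E)
| sc_extr : forall a C D, ~ In a (cfn C) -> sc (CPar C (CNu a D)) (CNu a (CPar C D))
| sc_alpha : forall a b C, ~ In b (cnames C) -> sc (CNu a C) (CNu b (cren a b C))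
| sc_par : forall C D E, sc C D -> sc (CPar C E) (CPar D E)
| sc_nu : forall a C D, sc C D -> sc (CNu a C) (CNu a D).

Inductive red : config -> config -> Prop :=
| red_give : forall E W a Vs,
    red (CPar (CTm (plug E (TGive W (VName a)))) (CBuf a Vs))
        (CPar (CTm (plug E (TRet VUnit))) (CBuf a (Vs ++ [W])))
| red_take : forall E W a Vs,
    red (CPar (CTm (plug E (TTake (VName a)))) (CBuf a (W :: Vs)))
        (CPar (CTm (plug E (TRet W))) (CBuf a Vs))
| red_fork : forall E M,
    red (CTm (plug E (TFork M))) (CPar (CTm (plug E (TRet VUnit))) (CTm M))
| red_newch : forall E a, ~ In a (tnames (plug E TNewCh)) ->
    red (CTm (plug E TNewCh))
        (CNu a (CPar (CTm (plug E (TRet (VName a)))) (CBuf a [])))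
| red_term : forall M1 M2, tred M1 M2 -> red (CTm M1) (CTm M2)
| red_par : forall C1 C2 D, red C1 C2 -> red (CPar C1 D) (CPar C2 D)
| red_nu : forall a C1 C2, red C1 C2 -> red (CNu a C1) (CNu a C2)
| red_sc : forall C C1 C2 C', sc C C1 -> red C1 C2 -> sc C2 C' -> red C C'.

(* Gamma: names context (first match wins); X: de Bruijn variable context *)
Fixpoint nlookup (G : list (nat * ty)) (a : nat) : option ty :=
  match G with
  | [] => None
  | (b, A) :: G' => if b =? a then Some A else nlookup G' a
  end.

Inductive vtype (G : list (nat * ty)) : list ty -> val -> ty -> Prop :=
| vt_var : forall X n A, nth_error X n = Some A -> vtype G X (VVar n) A
| vt_name : forall X a A, nlookup G a = Some A -> vtype G X (VName a) A
| vt_lam : forall X M A B, ttype G (A :: X) M B -> vtype G X (VLam M) (TyArr A B)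
| vt_unit : forall X, vtype G X VUnit TyUnit
with ttype (G : list (nat * ty)) : list ty -> tm -> ty -> Prop :=
| tt_app : forall X V W A B, vtype G X V (TyArr A B) -> vtype G X W A -> ttype G X (TApp V W) B
| tt_let : forall X M N A B, ttype G X M A -> ttype G (A :: X) N B -> ttype G X (TLet M N) B
| tt_ret : forall X V A, vtype G X V A -> ttype G X (TRet V) A
| tt_give : forall X V W A, vtype G X V A -> vtype G X W (TyChan A) -> ttype G X (TGive V W) TyUnit
| tt_take : forall X V A, vtype G X V (TyChan A) -> ttype G X (TTake V) A
| tt_fork : forall X M, ttype G X M TyUnit -> ttype G X (TFork M) TyUnit
| tt_newch : forall X A, ttype G X TNewCh (TyChan A).

(* Gamma; Delta |- C  (Delta linear, with pairwise distinct names) *)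
Inductive ctype : list (nat * ty) -> list (nat * ty) -> config -> Prop :=
| ct_par : forall G D D1 D2 C1 C2,
    ctype G D1 C1 -> ctype G D2 C2 ->
    Permutation D (D1 ++ D2) -> NoDup (map fst D) ->
    ctype G D (CPar C1 C2)
| ct_chan : forall G D a A C,
    ~ In a (map fst D) ->
    ctype ((a, TyChan A) :: G) ((a, A) :: D) C ->
    ctype G D (CNu a C)
| ct_buf : forall G a A Vs,
    Forall (fun V => vtype G [] V A) Vs ->
    ctype G [(a, A)] (CBuf a Vs)
| ct_term : forall G M,
    ttype G [] M TyUnit -> ctype G [] (CTm M).

Fixpoint parl (c : config) (cs : list config) : config :=
  match cs with
  | [] => c
  | d :: ds => CPar c (parl d ds)
  end.

Definition nus (ns : list nat) (C : config) : config := fold_right CNu C ns.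

(* C' = (nu a_1)...(nu a_n)(M_1 || ... || M_m || a_1(V_1) || ... || a_n(V_n)),
   with ns = [a_1;...;a_n] pairwise distinct, Ms = [M_1;...;M_m],
   Vss = [V_1;...;V_n] *)
Definition canonical_shape (C' : config) (ns : list nat) (Ms : list tm)
    (Vss : list (list val)) : Prop :=
  length ns = length Vss /\ NoDup ns /\
  exists c cs,
    map CTm Ms ++ map (fun p => CBuf (fst p) (snd p)) (combine ns Vss) = c :: cs /\
    C' = nus ns (parl c cs).

Definition canonical_form_of (C' C : config) (ns : list nat) (Ms : list tm)
    (Vss : list (list val)) : Prop :=
  sc C' C /\ canonical_shape C' ns Ms Vss.

Inductive leaf : config -> config -> Prop :=
| leaf_tm : forall M, leaf (CTm M) (CTm M)
| leaf_buf : forall a Vs, leaf (CBuf a Vs) (CBuf a Vs)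
| leaf_parl : forall C D L, leaf C L -> leaf (CPar C D) L
| leaf_parr : forall C D L, leaf D L -> leaf (CPar C D) L
| leaf_nu : forall a C L, leaf C L -> leaf (CNu a C) L.

From Stdlib Require Import List Arith Lia Permutation.
Import ListNotations.

(* Structural congruence only reorders parallel components and renames bound
   names, so the canonical form is irreducible and closed, and each of its terms
   is typable once names may take any channel type.  By progress, a typable
   closed term is a [return], takes a term step, or is an effect in an
   evaluation context.  A term step, [fork] or [newCh] would reduce on its own;
   a [give] or [take] on a name [a], which by closedness is some [a_i], would
   reduce together with the buffer of [a_i] unless it is a [take] on an empty
   buffer. *)

(* Typing in which a name may be used at any channel type.  It forgets the
   name context, hence is invariant under renaming of names and survives the
   alpha-conversion steps of structural congruence. *)
Inductive vtype_ch : list ty -> val -> ty -> Prop :=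
| vch_var X n A : nth_error X n = Some A -> vtype_ch X (VVar n) A
| vch_name X a A : vtype_ch X (VName a) (TyChan A)
| vch_lam X M A B : ttype_ch (A :: X) M B -> vtype_ch X (VLam M) (TyArr A B)
| vch_unit X : vtype_ch X VUnit TyUnit
with ttype_ch : list ty -> tm -> ty -> Prop :=
| tch_app X V W A B :
    vtype_ch X V (TyArr A B) -> vtype_ch X W A -> ttype_ch X (TApp V W) B
| tch_let X M N A B :
    ttype_ch X M A -> ttype_ch (A :: X) N B -> ttype_ch X (TLet M N) B
| tch_ret X V A : vtype_ch X V A -> ttype_ch X (TRet V) A
| tch_give X V W A :
    vtype_ch X V A -> vtype_ch X W (TyChan A) -> ttype_ch X (TGive V W) TyUnit
| tch_take X V A : vtype_ch X V (TyChan A) -> ttype_ch X (TTake V) A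
| tch_fork X M : ttype_ch X M TyUnit -> ttype_ch X (TFork M) TyUnit
| tch_newch X A : ttype_ch X TNewCh (TyChan A).

Scheme vtype_mut := Induction for vtype Sort Prop
  with ttype_mut := Induction for ttype Sort Prop.
Combined Scheme typing_mut from vtype_mut, ttype_mut.
Scheme val_mut := Induction for val Sort Prop
  with tm_mut := Induction for tm Sort Prop.
Combined Scheme syntax_mut from val_mut, tm_mut.

Definition chan_ctx (G : list (nat * ty)) : Prop :=
  forall a T, nlookup G a = Some T -> exists A, T = TyChan A.

Lemma chan_ctx_nil : chan_ctx [].
Proof. discriminate. Qed.

Lemma chan_ctx_cons G a A : chan_ctx G -> chan_ctx ((a, TyChan A) :: G).
Proof.
  intros HG b T; simpl. destruct (a =? b); [intros [= <-]; eauto | apply HG].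
Qed.

Lemma typing_ch_of_chan_ctx G : chan_ctx G ->
  (forall X V A, vtype G X V A -> vtype_ch X V A) /\
  (forall X M A, ttype G X M A -> ttype_ch X M A).
Proof.
  intros HG. apply typing_mut; intros; try (econstructor; eauto; fail).
  destruct (HG _ _ e) as [A' ->]. constructor.
Qed.

Lemma typing_names_bound G :
  (forall X V A, vtype G X V A -> forall x, In x (vnames V) -> nlookup G x <> None) /\
  (forall X M A, ttype G X M A -> forall x, In x (tnames M) -> nlookup G x <> None).
Proof.
  apply typing_mut; simpl; intros; rewrite ?in_app_iff in *; try (intuition eauto; fail).
  destruct H as [<- | []]. congruence.
Qed.

Lemma typing_ch_ren a b :
  (forall V X A, vtype_ch X (vren a b V) A <-> vtype_ch X V A) /\
  (forall M X A, ttype_ch X (tren a b M) A <-> ttype_ch X M A).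
Proof.
  apply syntax_mut; simpl; intros; split; intro Hty; inversion Hty; subst;
    econstructor;
    try (match goal with IH : forall _ _, _ <-> _ |- _ => apply IH; eassumption end);
    eauto.
Qed.

Lemma vtype_ch_arrow_lam V A B : vtype_ch [] V (TyArr A B) -> exists M, V = VLam M.
Proof. inversion 1; subst; [destruct n; discriminate | eauto]. Qed.

Lemma vtype_ch_chan_name V A : vtype_ch [] V (TyChan A) -> exists a, V = VName a.
Proof. inversion 1; subst; [destruct n; discriminate | eauto]. Qed.

Inductive effect : tm -> Prop :=
| effect_fork M : effect (TFork M)
| effect_newch : effect TNewCh
| effect_give W a : effect (TGive W (VName a))
| effect_take a : effect (TTake (VName a)).

Lemma ttype_ch_progress M A : ttype_ch [] M A ->
  (exists V, M = TRet V) \/ (exists M', tred M M') \/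
  (exists E N, effect N /\ M = plug E N).
Proof.
  revert A; induction M as [V W | M1 IH1 M2 _ | V | M _ | V W | V |]; intros A0 HM;
    inversion HM; subst.
  - destruct (vtype_ch_arrow_lam _ _ _ H2) as [M ->]. right; left. eexists; apply tred_beta.
  - destruct (IH1 _ H2) as [[V ->] | [[M1' HM1] | [E [N [HN ->]]]]]; right.
    + left. eexists; apply tred_let.
    + left. exists (TLet M1' M2). apply (tred_ctx (ELet EHole M2)), HM1.
    + right. exists (ELet E M2), N. auto.
  - left; eauto.
  - right; right. exists EHole, (TFork M). split; [constructor | auto].
  - destruct (vtype_ch_chan_name _ _ H4) as [a ->].
    right; right. exists EHole, (TGive V (VName a)). split; [constructor | auto].
  - destruct (vtype_ch_chan_name _ _ H1) as [a ->].
    right; right. exists EHole, (TTake (VName a)). split; [constructor | auto].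
  - right; right. exists EHole, TNewCh. split; [constructor | auto].
Qed.

Lemma names_ren a b :
  (forall V, vnames (vren a b V) = map (rn a b) (vnames V)) /\
  (forall M, tnames (tren a b M) = map (rn a b) (tnames M)).
Proof. apply syntax_mut; simpl; intros; rewrite ?map_app; congruence. Qed.

Lemma in_map_rn a b x l :
  In x (map (rn a b) l) <-> (In x l /\ x <> a) \/ (x = b /\ In a l).
Proof.
  rewrite in_map_iff; unfold rn; split.
  - intros [y [Hy Hin]]. destruct (Nat.eqb_spec y a); subst; auto.
  - intros [[Hx Hxa] | [-> Ha]].
    + exists x. destruct (Nat.eqb_spec x a); [congruence | auto].
    + exists a. rewrite Nat.eqb_refl. auto.
Qed.

Lemma flat_map_vnames_ren a b Vs :
  flat_map vnames (map (vren a b) Vs) = map (rn a b) (flat_map vnames Vs).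
Proof.
  induction Vs as [| V Vs IH]; simpl; [reflexivity |].
  rewrite map_app, IH, (proj1 (names_ren a b)). reflexivity.
Qed.

Lemma in_cfn_cnames C x : In x (cfn C) -> In x (cnames C).
Proof.
  induction C; simpl; rewrite ?in_app_iff, ?filter_In; tauto.
Qed.

Lemma in_cfn_cren a b C : ~ In b (cnames C) -> forall x,
  In x (cfn (cren a b C)) <-> (In x (cfn C) /\ x <> a) \/ (x = b /\ In a (cfn C)).
Proof.
  induction C as [C1 IH1 C2 IH2 | c C IH | c Vs | M]; simpl; intros Hb x.
  - rewrite in_app_iff in Hb. rewrite !in_app_iff, IH1, IH2 by tauto. tauto.
  - destruct (Nat.eqb_spec c a) as [-> | Hca]; simpl; rewrite !filter_In.
    + rewrite Nat.eqb_refl. destruct (Nat.eqb_spec x a); simpl; intuition congruence.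
    + rewrite IH by tauto.
      destruct (Nat.eqb_spec x c), (Nat.eqb_spec a c); simpl; intuition (subst; try congruence).
  - rewrite flat_map_vnames_ren. apply (in_map_rn a b x (c :: flat_map vnames Vs)).
  - rewrite (proj2 (names_ren a b)), in_map_rn. tauto.
Qed.

Lemma in_cfn_sc C D : sc C D -> forall x, In x (cfn C) <-> In x (cfn D).
Proof.
  induction 1; simpl; intros x; rewrite ?in_app_iff, ?filter_In, ?in_app_iff;
    try (firstorder; fail).
  - destruct (Nat.eqb_spec x a); subst; simpl; intuition.
  - rewrite in_cfn_cren by assumption.
    destruct (Nat.eqb_spec x a), (Nat.eqb_spec x b); subst; simpl; intuition (try congruence).
    apply in_cfn_cnames in H1. tauto.
Qed.

Fixpoint terms_typed (C : config) : Prop :=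
  match C with
  | CPar C D => terms_typed C /\ terms_typed D
  | CNu _ C => terms_typed C
  | CBuf _ _ => True
  | CTm M => exists A, ttype_ch [] M A
  end.

Lemma terms_typed_cren a b C : terms_typed (cren a b C) <-> terms_typed C.
Proof.
  induction C; simpl; try tauto.
  - destruct (n =? a); simpl; tauto.
  - split; intros [A HA]; exists A; apply (proj2 (typing_ch_ren a b)), HA.
Qed.

Lemma terms_typed_sc C D : sc C D -> terms_typed C <-> terms_typed D.
Proof. induction 1; simpl; rewrite ?terms_typed_cren; tauto. Qed.

Lemma ctype_terms_typed G D C : ctype G D C -> chan_ctx G -> terms_typed C.
Proof.
  induction 1; intros HG; simpl; auto using chan_ctx_cons.
  exists TyUnit. eapply (typing_ch_of_chan_ctx G HG); eassumption.
Qed.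

Lemma ctype_cfn G D C : ctype G D C ->
  forall x, In x (cfn C) -> nlookup G x <> None \/ In x (map fst D).
Proof.
  induction 1; intros x Hx; simpl in Hx.
  - assert (HD : Permutation (map fst D) (map fst D1 ++ map fst D2)).
    { rewrite <- map_app. apply Permutation_map; assumption. }
    assert (Happ : In x (map fst D1 ++ map fst D2) -> In x (map fst D))
      by apply (Permutation_in _ (Permutation_sym HD)).
    rewrite in_app_iff in Hx, Happ. destruct Hx as [Hx | Hx];
      [destruct (IHctype1 x Hx) | destruct (IHctype2 x Hx)]; tauto.
  - rewrite filter_In in Hx. destruct Hx as [Hx Hxa].
    destruct (IHctype x Hx) as [Hl | [Hl | Hl]]; simpl in *;
      destruct (Nat.eqb_spec a x); subst; rewrite ?Nat.eqb_refl in Hxa;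
      simpl in Hxa; try discriminate; auto; congruence.
  - destruct Hx as [<- | Hx]; [simpl; auto | left].
    apply in_flat_map in Hx. destruct Hx as [V [HV Hx]].
    rewrite Forall_forall in H.
    eapply (proj1 (typing_names_bound G)); eauto.
  - left. eapply (proj2 (typing_names_bound G)); eauto.
Qed.

Definition irreducible (C : config) : Prop := forall C', ~ red C C'.

Lemma irreducible_sc C D : sc C D -> irreducible C -> irreducible D.
Proof.
  intros Hsc HC C' Hred. apply (HC C').
  eapply red_sc; [exact Hsc | exact Hred | apply sc_refl].
Qed.

Lemma irreducible_nus ns P : irreducible (nus ns P) -> irreducible P.
Proof.
  induction ns as [| a ns IH]; simpl; [auto |].
  intros H. apply IH. intros P' Hred. apply (H (CNu a P')), red_nu, Hred.
Qed.

Lemma sc_parr C D E : sc C D -> sc (CPar E C) (CPar E D).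
Proof.
  intros H. eapply sc_trans; [apply sc_comm |].
  eapply sc_trans; [apply sc_par, H | apply sc_comm].
Qed.

Lemma sc_parl_perm c cs d ds :
  Permutation (c :: cs) (d :: ds) -> sc (parl c cs) (parl d ds).
Proof.
  remember (c :: cs) as l eqn:Hl. remember (d :: ds) as l' eqn:Hl'.
  intros Hp. revert c cs d ds Hl Hl'.
  induction Hp as [| x l l' Hp IH | y x l | l l' l'' Hp1 IH1 Hp2 IH2];
    intros c cs d ds Hl Hl'; try discriminate.
  - injection Hl as <- <-; injection Hl' as <- <-.
    destruct l as [| y r], l' as [| z r'].
    + apply sc_refl.
    + apply Permutation_nil in Hp. discriminate.
    + apply Permutation_sym, Permutation_nil in Hp. discriminate.
    + apply sc_parr, IH; reflexivity.
  - injection Hl as <- <-; injection Hl' as <- <-.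
    destruct l as [| z r]; simpl; [apply sc_comm |].
    eapply sc_trans; [apply sc_assoc |].
    eapply sc_trans; [apply sc_par, sc_comm | apply sc_sym, sc_assoc].
  - subst. destruct l' as [| e es].
    + apply Permutation_sym, Permutation_nil in Hp1. discriminate.
    + eapply sc_trans; [apply IH1 | apply IH2]; reflexivity.
Qed.

Lemma irreducible_parl_head d ds : irreducible (parl d ds) -> irreducible d.
Proof.
  destruct ds as [| e es]; simpl; [auto |].
  intros H d' Hred. apply (H (CPar d' (parl e es))), red_par, Hred.
Qed.

Lemma irreducible_parl_head2 d e ds :
  irreducible (parl d (e :: ds)) -> irreducible (CPar d e).
Proof.
  destruct ds as [| f fs]; simpl; [auto |].
  intros H R Hred. apply (H (CPar R (parl f fs))).
  eapply red_sc; [apply sc_assoc | apply red_par, Hred | apply sc_refl].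
Qed.

Lemma irreducible_parl_mem c cs X :
  irreducible (parl c cs) -> In X (c :: cs) -> irreducible X.
Proof.
  intros H HX. apply in_split in HX as [l1 [l2 Hl]].
  apply (irreducible_parl_head X (l1 ++ l2)).
  eapply irreducible_sc; [| exact H].
  apply sc_parl_perm. rewrite Hl. apply Permutation_sym, Permutation_middle.
Qed.

Lemma irreducible_parl_pair c cs X Y :
  irreducible (parl c cs) -> In X (c :: cs) -> In Y (c :: cs) -> X <> Y ->
  irreducible (CPar X Y).
Proof.
  intros H HX HY Hne. apply in_split in HX as [l1 [l2 Hl]].
  assert (HY' : In Y (l1 ++ l2)).
  { rewrite Hl, in_app_iff in HY. simpl in HY. apply in_app_iff. intuition congruence. }
  apply in_split in HY' as [m1 [m2 Hm]].
  apply (irreducible_parl_head2 X Y (m1 ++ m2)).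
  eapply irreducible_sc; [| exact H].
  apply sc_parl_perm. rewrite Hl.
  eapply Permutation_trans; [apply Permutation_sym, Permutation_middle |].
  apply perm_skip. rewrite Hm. apply Permutation_sym, Permutation_middle.
Qed.

Lemma in_cfn_nus ns P x : In x (cfn (nus ns P)) <-> In x (cfn P) /\ ~ In x ns.
Proof.
  induction ns as [| a ns IH]; simpl; [tauto |].
  rewrite filter_In, IH. destruct (Nat.eqb_spec x a); simpl; intuition congruence.
Qed.

Lemma in_cfn_parl c cs X x : In X (c :: cs) -> In x (cfn X) -> In x (cfn (parl c cs)).
Proof.
  revert c. induction cs as [| d ds IH]; intros c HX Hx; simpl in *.
  - destruct HX as [<- | []]. exact Hx.
  - apply in_app_iff. destruct HX as [<- | HX]; [left; exact Hx | right; apply IH, Hx; exact HX].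
Qed.

Lemma terms_typed_nus ns P : terms_typed (nus ns P) -> terms_typed P.
Proof. induction ns; simpl; auto. Qed.

Lemma terms_typed_parl c cs X : terms_typed (parl c cs) -> In X (c :: cs) -> terms_typed X.
Proof.
  revert c. induction cs as [| d ds IH]; intros c Hc HX; simpl in *.
  - destruct HX as [<- | []]. exact Hc.
  - destruct HX as [<- | HX]; [tauto | apply (IH d); tauto].
Qed.

Lemma leaf_nus ns P L : leaf (nus ns P) L -> leaf P L.
Proof. induction ns; simpl; [auto | inversion 1; auto]. Qed.

Lemma leaf_parl c cs L : leaf (parl c cs) L -> exists X, In X (c :: cs) /\ leaf X L.
Proof.
  revert c. induction cs as [| d ds IH]; simpl; intros c HL; [eauto |].
  inversion HL as [| | | ? ? ? Hds |]; subst; [eauto |].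
  destruct (IH d Hds) as [X [HX HXL]]. eauto.
Qed.

Lemma in_tnames_plug E M x : In x (tnames M) -> In x (tnames (plug E M)).
Proof. induction E; simpl; intros; rewrite ?in_app_iff; auto. Qed.

Lemma nth_error_combine {A B} (l1 : list A) (l2 : list B) i x y :
  nth_error (combine l1 l2) i = Some (x, y) <->
  nth_error l1 i = Some x /\ nth_error l2 i = Some y.
Proof.
  revert l2 i; induction l1; destruct l2, i; simpl; try (intuition congruence; fail).
  apply IHl1.
Qed.

Lemma exists_fresh (l : list nat) : exists a, ~ In a l.
Proof.
  exists (S (list_max l)). intros H.
  assert (Hmax : Forall (fun k => k <= list_max l) l) by (apply list_max_le; lia).
  rewrite Forall_forall in Hmax. specialize (Hmax _ H). lia.
Qed.

Definition final_leaf (ns : list nat) (Vss : list (list val)) (L : config) : Prop :=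
  (exists i a Vs, nth_error ns i = Some a /\ nth_error Vss i = Some Vs /\
                  L = CBuf a Vs)
  \/ (exists V, L = CTm (TRet V))
  \/ (exists E i a, nth_error ns i = Some a /\ nth_error Vss i = Some [] /\
                    L = CTm (plug E (TTake (VName a)))).

Section CanonicalComponents.

Variables (ns : list nat) (Ms : list tm) (Vss : list (list val)).
Variables (c : config) (cs : list config).

Hypothesis Hlen : length ns = length Vss.
Hypothesis Hcomps :
  map CTm Ms ++ map (fun p => CBuf (fst p) (snd p)) (combine ns Vss) = c :: cs.
Hypothesis Hirr : irreducible (parl c cs).
Hypothesis Htyped : terms_typed (parl c cs).
Hypothesis Hbound : forall x, In x (cfn (parl c cs)) -> In x ns.

Lemma buffer_component a : In a ns -> exists i Vs,
  nth_error ns i = Some a /\ nth_error Vss i = Some Vs /\ In (CBuf a Vs) (c :: cs).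
Proof.
  intros Ha. apply In_nth_error in Ha as [i Hi].
  destruct (nth_error Vss i) as [Vs |] eqn:HVs.
  - exists i, Vs. repeat split; auto.
    rewrite <- Hcomps. apply in_app_iff; right.
    apply (in_map (fun p => CBuf (fst p) (snd p)) _ (a, Vs)).
    eapply nth_error_In, nth_error_combine. eauto.
  - apply nth_error_None in HVs.
    assert (i < length ns) by (apply nth_error_Some; congruence). lia.
Qed.

Lemma term_component_final M : In (CTm M) (c :: cs) -> final_leaf ns Vss (CTm M).
Proof.
  intros HM. right.
  assert (Hstuck : irreducible (CTm M)) by exact (irreducible_parl_mem _ _ _ Hirr HM).
  assert (Hnames : forall a, In a (tnames M) -> In a ns)
    by (intros a Ha; apply Hbound, (in_cfn_parl _ _ _ _ HM), Ha).
  destruct (terms_typed_parl _ _ _ Htyped HM) as [A HA].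
  destruct (ttype_ch_progress M A HA) as [[V ->] | [[M' HM'] | [E [N [HN ->]]]]];
    [left; eauto | exfalso; apply (Hstuck (CTm M')), red_term, HM' |].
  destruct HN as [N | | W a | a].
  - exfalso. eapply Hstuck, red_fork.
  - exfalso. destruct (exists_fresh (tnames (plug E TNewCh))) as [a Ha].
    eapply Hstuck, red_newch, Ha.
  - exfalso.
    assert (Ha : In a ns)
      by (apply Hnames, in_tnames_plug; simpl; rewrite in_app_iff; simpl; auto).
    destruct (buffer_component a Ha) as [i [Vs [_ [_ HB]]]].
    eapply (irreducible_parl_pair _ _ _ _ Hirr HM HB); [discriminate | apply red_give].
  - assert (Ha : In a ns) by (apply Hnames, in_tnames_plug; simpl; auto).
    destruct (buffer_component a Ha) as [i [[| W Vs] [Hi [HVs HB]]]].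
    + right. exists E, i, a. auto.
    + exfalso.
      eapply (irreducible_parl_pair _ _ _ _ Hirr HM HB); [discriminate | apply red_take].
Qed.

Lemma component_final X : In X (c :: cs) -> final_leaf ns Vss X.
Proof.
  intros HX. assert (HX' := HX). rewrite <- Hcomps, in_app_iff, !in_map_iff in HX'.
  destruct HX' as [[M [<- _]] | [[a Vs] [<- HaVs]]].
  - apply term_component_final, HX.
  - left. apply In_nth_error in HaVs as [i Hi]. apply nth_error_combine in Hi.
    exists i, a, Vs. simpl. tauto.
Qed.

Lemma leaf_parl_component L : leaf (parl c cs) L -> In L (c :: cs).
Proof.
  intros HL. destruct (leaf_parl _ _ _ HL) as [X [HX HXL]].
  assert (HX' := HX). rewrite <- Hcomps, in_app_iff, !in_map_iff in HX'.
  destruct HX' as [[M [<- _]] | [p [<- _]]]; inversion HXL; subst; exact HX.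
Qed.

End CanonicalComponents.

Theorem theorem8 (C C' : config) (ns : list nat) (Ms : list tm)
    (Vss : list (list val)) :
  ctype [] [] C ->
  (forall C2, ~ red C C2) ->
  canonical_form_of C' C ns Ms Vss ->
  forall L, leaf C' L ->
    (exists i a Vs, nth_error ns i = Some a /\ nth_error Vss i = Some Vs /\
                    L = CBuf a Vs)
    \/ (exists V, L = CTm (TRet V))
    \/ (exists E i a, nth_error ns i = Some a /\ nth_error Vss i = Some [] /\
                      L = CTm (plug E (TTake (VName a)))).
Proof.
  intros HC Hirr [Hsc [Hlen [_ [c [cs [Hcomps ->]]]]]] L HL.
  assert (Hirr' : irreducible (parl c cs))
    by exact (irreducible_nus ns _ (irreducible_sc _ _ (sc_sym _ _ Hsc) Hirr)).
  assert (Htyped : terms_typed (parl c cs)).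
  { apply (terms_typed_nus ns), (terms_typed_sc _ _ Hsc).
    apply (ctype_terms_typed _ _ _ HC chan_ctx_nil). }
  assert (Hbound : forall x, In x (cfn (parl c cs)) -> In x ns).
  { intros x Hx. destruct (in_dec Nat.eq_dec x ns) as [| Hxns]; [assumption | exfalso].
    assert (HxC : In x (cfn C)) by (apply (in_cfn_sc _ _ Hsc), in_cfn_nus; auto).
    destruct (ctype_cfn _ _ _ HC x HxC) as [Hnone | []]. apply Hnone. reflexivity. }
  apply (component_final ns Ms Vss c cs); try assumption.
  apply (leaf_parl_component ns Ms Vss c cs Hcomps), (leaf_nus ns), HL.
Qed.
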